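(* Let $Q\subseteq M$ be nonempty with $n=|Q|$, and let $a\in M$ minimize $\mathrm{med}(Q,z)=\sum_{q\in Q}d(q,z)$ over $z\in M$. Let $i\le i_{\mathrm{top}}$ be an integer and $y\in Y_i$ such that $\mathrm{med}(Q,y)\le 3n\,2^{i}$ and $\min_{z\in L_{y,i,7}}\mathrm{med}(Q,z)>3n\,2^{i-1}$. Then $\mathrm{med}(Q,a)>n\,2^{i-1}$, and consequently $\mathrm{med}(Q,y)<6\,\mathrm{med}(Q,a)$.
   Context: $(M,d)$ is a finite metric space with at least two points whose minimum interpoint distance is $1$; let $i_{\mathrm{top}}=\lceil\log_2\operatorname{diam}(M)\rceil$. Net hierarchy: $Y_0=M$, and for $i=1,\dots,i_{\mathrm{top}}$, $Y_i\subseteq Y_{i-1}$ is a $2^i$-net of $Y_{i-1}$, i.e. any two distinct points of $Y_i$ are at distance $\ge 2^i$ and every point of $Y_{i-1}$ is at distance $<2^i$ from some point of $Y_i$. By convention $Y_i=M$ for all integers $i<0$. For $y\in Y_i$ and $c\ge1$, the $c$-list is $L_{y,i,c}=\{z\in Y_{i-1}: d(y,z)\le c\,2^i\}$. *)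

From HB Require Import structures.
From mathcomp Require Import all_boot all_order all_algebra.
Set Implicit Arguments. Unset Strict Implicit. Unset Printing Implicit Defensive.
Import Order.TTheory GRing.Theory Num.Theory.
Local Open Scope ring_scope.

Definition finite_metric_min1 (R : realFieldType) (T : finType) (d : T -> T -> R) : Prop :=
  [/\ (forall x, d x x = 0),
      (forall x y, d x y = d y x),
      (forall x y z, d x z <= d x y + d y z),
      (forall x y, x != y -> 1 <= d x y)
    & (exists x y, x != y /\ d x y = 1)].

(* diam(M) = max of distances (all distances are >= 0). *)
Definition diam (R : realFieldType) (T : finType) (d : T -> T -> R) : R :=
  \big[Num.max/0]_(p : T * T) d p.1 p.2.

Definition is_ceil_log2 (R : realFieldType) (D : R) (k : int) : Prop :=
  (2 : R) ^ (k - 1) < D <= (2 : R) ^ k.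

Definition net_hierarchy (R : realFieldType) (T : finType) (d : T -> T -> R)
    (itop : int) (Y : int -> {set T}) : Prop :=
  (forall i : int, i <= 0 -> Y i = [set: T]) /\
  (forall i : int, 1 <= i <= itop ->
     [/\ Y i \subset Y (i - 1),
         (forall x y, x \in Y i -> y \in Y i -> x != y -> (2 : R) ^ i <= d x y)
       & (forall x, x \in Y (i - 1) -> exists2 z, z \in Y i & d x z < (2 : R) ^ i)]).

Definition clist (R : realFieldType) (T : finType) (d : T -> T -> R)
    (Y : int -> {set T}) (y : T) (i : int) (c : R) : {set T} :=
  [set z in Y (i - 1) | d y z <= c * (2 : R) ^ i].

Definition med (R : realFieldType) (T : finType) (d : T -> T -> R)
    (Q : {set T}) (z : T) : R :=
  \sum_(q in Q) d q z.

From HB Require Import structures.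
From mathcomp Require Import all_boot all_order all_algebra.
From mathcomp Require Import ring lra.
Set Implicit Arguments. Unset Strict Implicit. Unset Printing Implicit Defensive.
Import Order.TTheory GRing.Theory Num.Theory.
Local Open Scope ring_scope.

(* Write n = |Q| and p = 2^(i-1), so that 2^i = 2p.
   Two elementary facts drive the argument:
   - the net hierarchy is "2^(j+1)-dense at every level": following net
     points down the levels 1, ..., j, any point x lies within
     2 + 4 + ... + 2^j < 2^(j+1) of some point of Y_j (for j <= itop);
   - med(Q, .) is n-Lipschitz, and n d(y,a) <= med(Q,y) + med(Q,a).
   Suppose med(Q,a) <= n p.  Then n d(y,a) <= 6np + np, so d(y,a) <= 7p.
   Take z in Y_(i-1) with d(a,z) < 2p; then d(y,z) < 9p <= 7 * 2^i, so z is
   in the list L_(y,i,7), yet med(Q,z) <= med(Q,a) + n d(a,z) < 3np,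
   contradicting the hypothesis on the list.  Hence med(Q,a) > n p, and
   med(Q,y) <= 6np < 6 med(Q,a). *)

Lemma exprz_two_pred (R : realFieldType) (i : int) :
  (2 : R) ^ i = 2 * 2 ^ (i - 1).
Proof.
have unit2 : (2 : R) \is a GRing.unit by rewrite unitfE pnatr_eq0.
by rewrite -[in LHS](subrK 1 i) (exprzDr unit2 (i - 1) 1) expr1z mulrC.
Qed.

Section NetsAndMedians.

Variables (R : realFieldType) (T : finType) (d : T -> T -> R).
Hypothesis d_refl : forall x, d x x = 0.
Hypothesis d_sym : forall x y, d x y = d y x.
Hypothesis d_tri : forall x y z, d x z <= d x y + d y z.

(* Descending through the levels 1..k of a net hierarchy, each step costs
   less than 2^j, so any point is within 2^(k+1) - 2 of the level Y_k. *)
Lemma net_descent (itop : int) (Y : int -> {set T}) :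
  net_hierarchy d itop Y ->
  forall (k : nat) x, k%:Z <= itop ->
  exists2 z, z \in Y k%:Z & d x z <= (2 : R) ^+ k.+1 - 2.
Proof.
move=> [Y_le0 Y_net]; elim=> [|k IH] x le_k_top.
  by exists x; rewrite ?Y_le0 // d_refl expr1 subrr.
have le_k_k1 : k%:Z <= k.+1%:Z by rewrite lez_nat.
have [z zY dxz] := IH x (le_trans le_k_k1 le_k_top).
have lvl : 1 <= k.+1%:Z <= itop by rewrite le_k_top andbT lez_nat.
have [_ _ cover] := Y_net _ lvl.
have prev : k.+1%:Z - 1 = k%:Z by rewrite -addn1 PoszD addrK.
rewrite prev in cover; have [w wY dzw] := cover z zY.
have pow_nat : (2 : R) ^ k.+1%:Z = 2 ^+ k.+1 by [].
exists w => //; have := d_tri x z w.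
by move: dzw; rewrite pow_nat (exprS _ k.+1); lra.
Qed.

Lemma net_dense (itop : int) (Y : int -> {set T}) (j : int) (x : T) :
  net_hierarchy d itop Y -> j <= itop ->
  exists2 z, z \in Y j & d x z < (2 : R) ^ (j + 1).
Proof.
move=> NH le_j_top; case: (lerP j 0) => j_sign.
  by exists x; rewrite ?(proj1 NH) // d_refl exprz_gt0.
have [k j_nat] : exists k : nat, j = k%:Z by exists `|j|%N; rewrite gez0_abs // ltW.
rewrite j_nat in le_j_top *; have [z zY dxz] := net_descent NH x le_j_top.
exists z => //; rewrite -PoszD addn1.
have pow_nat : (2 : R) ^ k.+1%:Z = 2 ^+ k.+1 by [].
by rewrite pow_nat; lra.
Qed.

Lemma med_lipschitz (Q : {set T}) a z :
  med d Q z <= med d Q a + #|Q|%:R * d a z.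
Proof.
rewrite /med mulr_natl -sumr_const -big_split /=.
by apply: ler_sum => q _; apply: d_tri.
Qed.

Lemma card_dist_le_med (Q : {set T}) a y :
  #|Q|%:R * d y a <= med d Q y + med d Q a.
Proof.
rewrite /med mulr_natl -sumr_const -big_split /=.
by apply: ler_sum => q _; rewrite (d_sym q y); apply: d_tri.
Qed.

Lemma optimal_med_lower_bound (itop : int) (Y : int -> {set T})
    (Q : {set T}) (a y : T) (i : int) :
  net_hierarchy d itop Y -> Q != set0 -> i <= itop ->
  med d Q y <= 3 * #|Q|%:R * (2 : R) ^ i ->
  (forall z, z \in clist d Y y i 7 -> 3 * #|Q|%:R * (2 : R) ^ (i - 1) < med d Q z) ->
  #|Q|%:R * (2 : R) ^ (i - 1) < med d Q a.
Proof.
move=> NH Qn0 le_i_top med_y list_far.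
set n : R := #|Q|%:R; set p : R := 2 ^ (i - 1).
have n_gt0 : 0 < n by rewrite /n ltr0n card_gt0.
have p_gt0 : 0 < p by rewrite /p exprz_gt0.
have two_p : (2 : R) ^ i = 2 * p by exact: exprz_two_pred.
rewrite ltNge; apply/negP => med_a.
have [z zY daz] := net_dense a NH (le_trans (gerDl i (-1)) le_i_top).
rewrite subrK two_p in daz.
have dya : d y a <= 7 * p.
  rewrite -(ler_pM2l n_gt0); have := card_dist_le_med Q a y.
  move: med_y; rewrite two_p -/n; lra.
have z_in_list : z \in clist d Y y i 7.
  by rewrite inE zY /= two_p; have := d_tri y a z; lra.
have := list_far z z_in_list; have := med_lipschitz Q a z.
have : n * d a z <= n * (2 * p) by rewrite ler_pM2l // ltW.
rewrite -/n -/p; lra.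
Qed.

End NetsAndMedians.

Theorem mainTheorem5 (R : realFieldType) (T : finType) (d : T -> T -> R)
    (itop : int) (Y : int -> {set T}) (Q : {set T}) (a y : T) (i : int) :
  finite_metric_min1 d ->
  is_ceil_log2 (diam d) itop ->
  net_hierarchy d itop Y ->
  Q != set0 ->
  (forall z, med d Q a <= med d Q z) ->
  i <= itop ->
  y \in Y i ->
  med d Q y <= 3 * #|Q|%:R * (2 : R) ^ i ->
  (forall z, z \in clist d Y y i 7 -> 3 * #|Q|%:R * (2 : R) ^ (i - 1) < med d Q z) ->
  #|Q|%:R * (2 : R) ^ (i - 1) < med d Q a /\ med d Q y < 6 * med d Q a.
Proof.
move=> [d_refl d_sym d_tri _ _] _ NH Qn0 _ le_i_top _ med_y list_far.
have lower := optimal_med_lower_bound d_refl d_sym d_tri a NH Qn0 le_i_top med_y list_far.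
split => //; move: lower med_y; rewrite (exprz_two_pred _ i).
set n : R := #|Q|%:R; set p : R := 2 ^ (i - 1).
have : 3 * n * (2 * p) = 6 * (n * p) by ring.
lra.
Qed.
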